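(* Let $\epsilon\in(0,1)$, $h>0$, $u_0\in\mathbb{R}$, and let $(u_n)_{n\ge0}$ be generated by the explicit Euler scheme $$\frac{u_n-u_{n-1}}{h}+\frac{1}{\epsilon^2}\big(u_{n-1}^3-u_{n-1}\big)=0,\qquad n\ge 1.$$ (i) If $u_0\in\{0,1,-1\}$, then $u_n=\mathrm{sign}(u_0)$ for all $n\ge1$, for any $h>0$ and any $\epsilon$. (ii) If $u_0\notin\{0,1,-1\}$, define $h^*=h^*(u_0,\epsilon)=\frac{\epsilon^2}{u_0^2+|u_0|}$ if $|u_0|>1$ and $h^*=\frac{\epsilon^2}{2}$ if $0<|u_0|<1$. Then $h^*>0$, and for every $h\in(0,h^*]$ the sequence $(u_n)$ is monotone and converges to $\mathrm{sign}(u_0)$ as $n\to\infty$.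
   Context: The scheme discretizes the ODE $u'(t)+\frac{1}{\epsilon^2}(u^3-u)=0$, $u(0)=u_0$. Here $\mathrm{sign}(0)=0$, $\mathrm{sign}(x)=1$ for $x>0$, $\mathrm{sign}(x)=-1$ for $x<0$. *)

From Stdlib Require Import Reals.
Open Scope R_scope.

Definition sign (x : R) : R :=
  if Rlt_dec 0 x then 1 else if Rlt_dec x 0 then -1 else 0.

Fixpoint euler (eps h u0 : R) (n : nat) : R :=
  match n with
  | O => u0
  | S k => let v := euler eps h u0 k in v - h / eps ^ 2 * (v ^ 3 - v)
  end.

Definition hstar (u0 eps : R) : R :=
  if Rlt_dec 1 (Rabs u0) then eps ^ 2 / (u0 ^ 2 + Rabs u0) else eps ^ 2 / 2.

(** For [a > 0] and [k = h / eps^2] one step of the scheme reads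
    [u' - 1 = (u - 1) (1 - k u (1 + u))].  The bound [h <= h*] says exactly
    [k * max (a (1 + a), 2) <= 1], so while [u] lies on the segment between
    [a] and [1] the factor [1 - k u (1 + u)] lies in [[0, r]] with
    [r = 1 - k * min (a (1 + a), 2) < 1].  Hence the iterates never leave the
    segment, move monotonically towards [1], and [|u_n - 1| <= r^n |a - 1|].
    The scheme is odd, which gives the case [a < 0]; [0] and [±1] are fixed
    points. *)

From Stdlib Require Import Reals Lra Psatz.
Open Scope R_scope.

Definition step (k v : R) : R := v - k * (v ^ 3 - v).

Lemma euler_S (eps h u0 : R) (n : nat) :
  euler eps h u0 (S n) = step (h / eps ^ 2) (euler eps h u0 n).
Proof. reflexivity. Qed.

Lemma step_opp (k v : R) : step k (- v) = - step k v.
Proof. unfold step; ring. Qed.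

Lemma step_sub1 (k v : R) : step k v - 1 = (v - 1) * (1 - k * (v * (1 + v))).
Proof. unfold step; ring. Qed.

Lemma step_sub (k v : R) : step k v - v = - (k * (v * (1 + v))) * (v - 1).
Proof. unfold step; ring. Qed.

Lemma euler_fixed_point (eps h u0 : R) :
  step (h / eps ^ 2) u0 = u0 -> forall n, euler eps h u0 n = u0.
Proof.
  intros Hfix n; induction n as [|n IH]; [reflexivity|].
  now rewrite euler_S, IH.
Qed.

Lemma sign_fixed (x : R) : x = 0 \/ x = 1 \/ x = -1 -> sign x = x.
Proof.
  unfold sign; intros [-> | [-> | ->]]; repeat destruct Rlt_dec; lra.
Qed.

Lemma sign_pos (x : R) : 0 < x -> sign x = 1.
Proof. unfold sign; intros Hx; destruct Rlt_dec; lra. Qed.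

Lemma sign_neg (x : R) : x < 0 -> sign x = -1.
Proof. unfold sign; intros Hx; repeat destruct Rlt_dec; lra. Qed.

Lemma hstar_Rmax (u0 eps : R) :
  hstar u0 eps = eps ^ 2 / Rmax (Rabs u0 * (1 + Rabs u0)) 2.
Proof.
  assert (Hsq : u0 ^ 2 + Rabs u0 = Rabs u0 * (1 + Rabs u0))
    by (rewrite <- pow2_abs; ring).
  pose proof (Rabs_pos u0).
  unfold hstar, Rmax; rewrite Hsq.
  destruct Rlt_dec, Rle_dec; try reflexivity; nra.
Qed.

Lemma le_hstar_step_bound (u0 eps h : R) :
  0 < eps -> h <= hstar u0 eps ->
  h / eps ^ 2 * Rmax (Rabs u0 * (1 + Rabs u0)) 2 <= 1.
Proof.
  intros Heps Hh; rewrite hstar_Rmax in Hh.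
  assert (Heps2 : 0 < eps ^ 2) by (apply pow_lt; lra).
  assert (HM : 0 < Rmax (Rabs u0 * (1 + Rabs u0)) 2)
    by (pose proof (Rmax_r (Rabs u0 * (1 + Rabs u0)) 2); lra).
  rewrite <- Rmult_div_swap.
  apply Rmult_le_reg_r with (eps ^ 2); [exact Heps2|].
  apply Rmult_le_compat_r with (r := Rmax (Rabs u0 * (1 + Rabs u0)) 2) in Hh;
    [|lra].
  unfold Rdiv in *; rewrite Rmult_assoc, Rinv_l, Rmult_1_r in Hh by lra.
  rewrite Rmult_assoc, Rinv_l by lra; lra.
Qed.

Lemma Un_cv_le_geom (u : nat -> R) (l r c : R) :
  0 <= r < 1 -> (forall n, Rabs (u n - l) <= r ^ n * c) -> Un_cv u l.
Proof.
  intros Hr Hbound e He.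
  assert (Hc : 0 <= c)
    by (specialize (Hbound O); pose proof (Rabs_pos (u O - l)); simpl in *; lra).
  destruct (pow_lt_1_zero r ltac:(rewrite Rabs_right; lra) (e / (c + 1)))
    as [N HN]; [apply Rdiv_lt_0_compat; lra|].
  exists N; intros n Hn; unfold Rdist.
  specialize (HN n Hn); rewrite Rabs_right in HN by (apply Rle_ge, pow_le; lra).
  assert (Hrn : 0 <= r ^ n) by (apply pow_le; lra).
  assert (r ^ n * (c + 1) < e).
  { apply Rmult_lt_compat_r with (r := c + 1) in HN; [|lra].
    unfold Rdiv in HN; rewrite Rmult_assoc, Rinv_l, Rmult_1_r in HN; lra. }
  specialize (Hbound n); nra.
Qed.

Lemma monotone_cv_opp (u : nat -> R) (l : R) :
  (Un_growing (fun n => - u n) \/ Un_decreasing (fun n => - u n)) /\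
    Un_cv (fun n => - u n) l ->
  (Un_growing u \/ Un_decreasing u) /\ Un_cv u (- l).
Proof.
  intros [Hmono Hcv]; split.
  - destruct Hmono as [Hg | Hd]; [right | left]; intros n;
      [specialize (Hg n) | specialize (Hd n)]; simpl in *; lra.
  - intros e He; destruct (Hcv e He) as [N HN]; exists N; intros n Hn.
    unfold Rdist in *.
    replace (u n - - l) with (- (- u n - l)) by ring.
    rewrite Rabs_Ropp; exact (HN n Hn).
Qed.

Lemma segment_mul1D_bounds (a t x : R) :
  0 < a -> 0 <= t <= 1 -> x = 1 + t * (a - 1) ->
  Rmin (a * (1 + a)) 2 <= x * (1 + x) <= Rmax (a * (1 + a)) 2.
Proof.
  intros Ha Ht Hx.
  assert (Ea : x * (1 + x) - a * (1 + a) = (1 - t) * (1 - a) * (1 + x + a))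
    by (subst; ring).
  assert (E1 : x * (1 + x) - 2 = t * (a - 1) * (x + 2)) by (subst; ring).
  assert (Hxpos : 0 < x) by nra.
  destruct (Rle_or_lt a 1) as [Hle | Hgt].
  - assert (0 <= (1 - t) * (1 - a)) by nra.
    assert (0 <= t * (1 - a)) by nra.
    rewrite Rmin_left, Rmax_right by nra; split; nra.
  - assert (0 <= (1 - t) * (a - 1)) by nra.
    assert (0 <= t * (a - 1)) by nra.
    rewrite Rmin_right, Rmax_left by nra; split; nra.
Qed.

Section Orbit.

Variables (k a : R) (u : nat -> R).
Hypotheses (Hk : 0 < k) (Ha : 0 < a)
  (Hbound : k * Rmax (a * (1 + a)) 2 <= 1)
  (Hu0 : u O = a) (HuS : forall n, u (S n) = step k (u n)).

Let rate := 1 - k * Rmin (a * (1 + a)) 2.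

Lemma rate_bounds : 0 <= rate < 1.
Proof.
  pose proof (Rmin_r (a * (1 + a)) 2); pose proof (Rmax_r (a * (1 + a)) 2).
  assert (Hpos : 0 < Rmin (a * (1 + a)) 2) by (apply Rmin_glb_lt; nra).
  unfold rate; split; nra.
Qed.

Lemma rate_pow_le1 (n : nat) : rate ^ n <= 1.
Proof.
  pose proof rate_bounds; rewrite <- (pow1 n); apply pow_incr; lra.
Qed.

Lemma step_segment (t : R) : 0 <= t <= 1 ->
  exists c, 0 <= c <= rate /\ step k (1 + t * (a - 1)) = 1 + t * c * (a - 1).
Proof.
  intros Ht; set (x := 1 + t * (a - 1)).
  destruct (segment_mul1D_bounds a t x Ha Ht eq_refl) as [Hlo Hhi].
  exists (1 - k * (x * (1 + x))); split.
  - unfold rate; split; nra.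
  - pose proof (step_sub1 k x) as E; unfold x in *; lra.
Qed.

Lemma orbit_segment (n : nat) :
  exists t, 0 <= t <= rate ^ n /\ u n = 1 + t * (a - 1).
Proof.
  pose proof rate_bounds as Hr.
  induction n as [|n [t [Ht Hun]]].
  - exists 1; simpl; split; [lra | rewrite Hu0; ring].
  - pose proof (rate_pow_le1 n).
    destruct (step_segment t ltac:(lra)) as [c [Hc Hstep]].
    exists (t * c); split.
    + simpl; split; nra.
    + rewrite HuS, Hun, Hstep; ring.
Qed.

Lemma orbit_increment (n : nat) :
  exists K, 0 <= K /\ u (S n) - u n = K * (1 - a).
Proof.
  destruct (orbit_segment n) as [t [Ht Hun]].
  pose proof (rate_pow_le1 n).
  assert (Hpos : 0 < u n) by nra.
  exists (k * (u n * (1 + u n)) * t); split.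
  - apply Rmult_le_pos; [apply Rmult_le_pos; nra | lra].
  - rewrite HuS, step_sub.
    replace (u n - 1) with (t * (a - 1)) by (rewrite Hun; ring); ring.
Qed.

Lemma orbit_monotone : Un_growing u \/ Un_decreasing u.
Proof.
  destruct (Rle_dec a 1) as [Hle | Hgt]; [left | right]; intros n;
    destruct (orbit_increment n) as [K [HK Hinc]]; nra.
Qed.

Lemma orbit_cv : Un_cv u 1.
Proof.
  apply Un_cv_le_geom with rate (Rabs (a - 1)); [exact rate_bounds|].
  intros n; destruct (orbit_segment n) as [t [Ht ->]].
  replace (1 + t * (a - 1) - 1) with (t * (a - 1)) by ring.
  rewrite Rabs_mult, Rabs_pos_eq by lra.
  apply Rmult_le_compat_r; [apply Rabs_pos | lra].
Qed.

Lemma orbit_monotone_cv : (Un_growing u \/ Un_decreasing u) /\ Un_cv u 1.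
Proof. exact (conj orbit_monotone orbit_cv). Qed.

End Orbit.

Theorem theorem2p2 (eps u0 : R) (Heps : 0 < eps < 1) :
  ((u0 = 0 \/ u0 = 1 \/ u0 = -1) ->
     forall h : R, 0 < h ->
     forall n : nat, (1 <= n)%nat -> euler eps h u0 n = sign u0)
  /\
  (~ (u0 = 0 \/ u0 = 1 \/ u0 = -1) ->
     0 < hstar u0 eps /\
     forall h : R, 0 < h <= hstar u0 eps ->
       (Un_growing (euler eps h u0) \/ Un_decreasing (euler eps h u0)) /\
       Un_cv (euler eps h u0) (sign u0)).
Proof.
  assert (Heps2 : 0 < eps ^ 2) by (apply pow_lt; lra).
  split.
  - intros Hfix h _ n _.
    rewrite sign_fixed by exact Hfix.
    apply euler_fixed_point.
    destruct Hfix as [-> | [-> | ->]]; unfold step; ring.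
  - intros Hnfix; split.
    + rewrite hstar_Rmax; apply Rdiv_lt_0_compat; [exact Heps2|].
      pose proof (Rmax_r (Rabs u0 * (1 + Rabs u0)) 2); lra.
    + intros h [Hh Hhstar].
      pose proof (le_hstar_step_bound u0 eps h ltac:(lra) Hhstar) as Hk.
      assert (Hk0 : 0 < h / eps ^ 2) by (apply Rdiv_lt_0_compat; lra).
      destruct (Rlt_or_le 0 u0) as [Hpos | Hnpos].
      * rewrite sign_pos, Rabs_pos_eq in * by lra.
        exact (orbit_monotone_cv _ _ _ Hk0 Hpos Hk eq_refl (euler_S eps h u0)).
      * assert (Hneg : u0 < 0) by (destruct Hnpos; [lra | tauto]).
        rewrite sign_neg, Rabs_left in * by lra.
        apply monotone_cv_opp.
        apply (orbit_monotone_cv (h / eps ^ 2) (- u0)); [lra | lra | exact Hk | ..].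
        -- reflexivity.
        -- intros n; rewrite euler_S, step_opp; reflexivity.
Qed.
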